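(* Let $G$ be a finite group. Then the co-prime graph $\Gamma_{CP}(G)$ is minimally connected if and only if $G$ is a $p$-group for some prime $p$.
   Context: The co-prime graph $\Gamma_{CP}(G)$ of a finite group $G$ is the simple undirected graph with vertex set $G$ in which two distinct elements $x,y$ are adjacent if and only if $\gcd(o(x),o(y))=1$. A $p$-group is a group of order $p^n$ for a prime $p$. For a connected graph $\Gamma$, a vertex cut-set is a set $S$ of vertices such that $\Gamma-S$ is disconnected or has just one vertex, and the vertex connectivity $\kappa(\Gamma)$ is the smallest size of a vertex cut-set. $\Gamma$ is minimally connected if $\kappa(\Gamma-\epsilon)=\kappa(\Gamma)-1$ for every edge $\epsilon$ of $\Gamma$. *)

From mathcomp Require Import all_boot all_order all_fingroup all_solvable.
Set Implicit Arguments. Unset Strict Implicit. Unset Printing Implicit Defensive.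

(* A simple graph: vertex set V : {set T} over a finType T, adjacency E : rel T
   (assumed symmetric and irreflexive on V; only pairs inside V matter). *)

Definition connected_in (T : finType) (E : rel T) (W : {set T}) (x y : T) :=
  connect [rel u v | [&& u \in W, v \in W & E u v]] x y.

Definition disconnected_on (T : finType) (E : rel T) (W : {set T}) :=
  [exists x in W, exists y in W, ~~ connected_in E W x y].

Definition is_connected_graph (T : finType) (V : {set T}) (E : rel T) :=
  [forall x in V, forall y in V, connected_in E V x y].

Definition vertex_cut (T : finType) (V : {set T}) (E : rel T) (S : {set T}) :=
  (S \subset V) && (disconnected_on E (V :\: S) || (#|V :\: S| == 1)).

(* vertex connectivity: smallest size of a vertex cut-set
   (default #|V| only matters for the empty graph, which has no cut-set) *)
Definition kappa (T : finType) (V : {set T}) (E : rel T) : nat :=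
  \big[minn/#|V|]_(S : {set T} | vertex_cut V E S) #|S|.

Definition del_edge (T : finType) (E : rel T) (a b : T) : rel T :=
  [rel x y | E x y && ~~ (((x == a) && (y == b)) || ((x == b) && (y == a)))].

Definition minimally_connected (T : finType) (V : {set T}) (E : rel T) :=
  is_connected_graph V E /\
  forall a b, a \in V -> b \in V -> a != b -> E a b ->
    kappa V (del_edge E a b) = kappa V E - 1.

Definition coprime_rel (gT : finGroupType) : rel gT :=
  [rel x y | (x != y) && coprime #[x]%g #[y]%g].

From mathcomp Require Import all_boot all_order all_fingroup all_solvable.
From mathcomp Require Import zify.
Set Implicit Arguments. Unset Strict Implicit. Unset Printing Implicit Defensive.

(* In Γ_CP(G) the identity is adjacent to every other vertex.  If G is a
   p-group the graph is a star centred at 1: it has connectivity 1 and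
   deleting any edge isolates a leaf.  Conversely, if the graph is minimally
   connected, deleting the edge {1, z} shows deg z <= κ <= min degree, so all
   nontrivial elements have the same degree.  Comparing g with an element of
   prime order in <g> shows that no element order has two prime divisors;
   then, for x, y of prime orders p <> q, the neighbourhoods of x and y (the
   elements of order coprime to p, resp. q) have equal size, but counting
   fixed points of conjugation by <x> gives 1 and 0 modulo p respectively. *)

Lemma connect_isolated (T : finType) (e : rel T) z y :
  (forall v, ~~ e z v) -> connect e z y -> y = z.
Proof.
move=> iso_z /connectP [[|v p] /= ez ->] //.
by move: ez; case/andP=> ezv; rewrite (negbTE (iso_z v)) in ezv.
Qed.

Lemma eq_disconnected_on (T : finType) (E1 E2 : rel T) (W : {set T}) :
  {in W &, E1 =2 E2} -> disconnected_on E1 W = disconnected_on E2 W.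
Proof.
move=> eqE; have eqW : [rel u v | [&& u \in W, v \in W & E1 u v]]
    =2 [rel u v | [&& u \in W, v \in W & E2 u v]].
  by move=> u v /=; case Wu: (u \in W); case Wv: (v \in W); rewrite //= eqE.
apply: eq_existsb => x; congr (_ && _); apply: eq_existsb => y.
by rewrite /connected_in (eq_connect eqW).
Qed.

Section VertexConnectivity.
Variables (T : finType) (V : {set T}) (E : rel T).

Lemma kappa_le_cut S : vertex_cut V E S -> kappa V E <= #|S|.
Proof.
move=> cutS; rewrite /kappa -big_filter.
have : S \in [seq i <- index_enum {set T} | vertex_cut V E i].
  by rewrite mem_filter cutS mem_index_enum.
elim: [seq _ <- _ | _] => [//|a s IH]; rewrite in_cons big_cons.
case/orP=> [/eqP->|/IH]; first exact: geq_minl.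
by apply: leq_trans; exact: geq_minr.
Qed.

Lemma kappa_le_card : kappa V E <= #|V|.
Proof.
rewrite /kappa; elim/big_ind: _ => // [a b a_le _|S /andP[SV _]].
  by rewrite geq_min a_le.
exact: subset_leq_card.
Qed.

Lemma kappa_attained :
  kappa V E < #|V| -> exists2 S, vertex_cut V E S & kappa V E = #|S|.
Proof.
rewrite /kappa; elim/big_ind: _ => [|a b IHa IHb|S cutS _]; first by rewrite ltnn.
  by rewrite /minn; case: (ltnP a b).
by exists S.
Qed.

Lemma kappa_gt0 : is_connected_graph V E -> 1 < #|V| -> 0 < kappa V E.
Proof.
move=> conn V_gt1; rewrite /kappa; elim/big_ind: _ => [|a b|S /andP[_ cutS]].
- exact: ltnW.
- by move=> a_gt0 b_gt0; rewrite leq_min a_gt0 b_gt0.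
rewrite lt0n cards_eq0; apply/eqP=> S0.
move: cutS; rewrite S0 setD0 eq_sym (ltn_eqF V_gt1) orbF.
case/existsP=> a /andP[Va /existsP[b /andP[Vb /negP]]]; apply.
by move/forallP/(_ a)/implyP/(_ Va)/forallP/(_ b)/implyP/(_ Vb): conn.
Qed.

Definition nbhd w := [set v in V | E w v].

Lemma isolated_vertex_cut (S : {set T}) w : S \subset V -> w \in V :\: S ->
  (forall v, v \in V :\: S -> ~~ E w v) -> vertex_cut V E S.
Proof.
move=> SV Ww iso_w; rewrite /vertex_cut SV /=.
set W := V :\: S in Ww iso_w *.
have [_|W_neq1] := eqVneq #|W| 1; first by rewrite orbT.
rewrite orbF.
have : 0 < #|W :\ w| by move: W_neq1; rewrite (cardsD1 w) Ww; lia.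
case/card_gt0P=> u; rewrite in_setD1 => /andP[uw Wu].
apply/existsP; exists w; rewrite Ww; apply/existsP; exists u; rewrite Wu /=.
have iso : forall v, ~~ [rel x y | [&& x \in W, y \in W & E x y]] w v.
  by move=> v /=; case Wv: (v \in W); rewrite ?andbF // Ww iso_w.
by apply/negP=> /(connect_isolated iso) uw_eq; rewrite uw_eq eqxx in uw.
Qed.

Lemma kappa_le_nbhd w : w \in V -> ~~ E w w -> kappa V E <= #|nbhd w|.
Proof.
move=> Vw Eww; apply/kappa_le_cut/(@isolated_vertex_cut _ w).
- by apply/subsetP=> v; rewrite inE => /andP[].
- by rewrite !inE Vw (negbTE Eww).
by move=> v; rewrite !inE; case: (v \in V); case: (E w v).
Qed.

End VertexConnectivity.

Section DeletedEdge.
Variables (T : finType) (V : {set T}) (E : rel T).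

Lemma del_edge_sym c z : symmetric E -> symmetric (del_edge E c z).
Proof.
by move=> Esym u v; rewrite /del_edge /= Esym orbC (andbC (u == z)) (andbC (u == c)).
Qed.

Lemma del_edge_disconnected_off c z (W : {set T}) :
  c \notin W -> disconnected_on (del_edge E c z) W = disconnected_on E W.
Proof.
move=> Wc; apply: eq_disconnected_on => u v Wu Wv.
have [uc vc] : u != c /\ v != c by split; apply: contraNneq Wc => <-.
by rewrite /del_edge /= (negbTE uc) (negbTE vc) andbF andbT.
Qed.

(* c still reaches z through h, and every other vertex directly. *)
Lemma del_edge_universal_connected c z h (W : {set T}) : symmetric E ->
  c \in W -> {in W, forall a, a != c -> E c a} ->
  h \in W -> h != c -> h != z -> E z h -> ~~ disconnected_on (del_edge E c z) W.
Proof.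
move=> Esym Wc univ Wh hc hz Ezh.
set R := [rel u v | [&& u \in W, v \in W & del_edge E c z u v]].
have R_sym : connect_sym R.
  apply: sym_connect_sym => u v /=; rewrite (del_edge_sym _ _ Esym u v).
  by case: (u \in W); case: (v \in W).
have edge u v : u \in W -> v \in W -> del_edge E c z u v -> connect R u v.
  by move=> Wu Wv Duv; apply: connect1; rewrite /= Wu Wv.
have c_to u : u \in W -> u != c -> u != z -> connect R c u.
  move=> Wu uc uz; apply: edge => //.
  by rewrite /del_edge /= univ // eqxx (negbTE uz) (negbTE uc) !andbF.
have c_to_all u : u \in W -> connect R c u.
  move=> Wu; have [->|uc] := eqVneq u c; first exact: connect0.
  have [uz|uz] := eqVneq u z; last exact: c_to.
  apply: connect_trans (c_to h Wh hc hz) (edge h u Wh Wu _).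
  by rewrite /del_edge /= uz Esym Ezh (negbTE hc) (negbTE hz).
apply/negP=> /existsP[a /andP[Wa /existsP[b /andP[Wb /negP]]]]; apply.
by apply: connect_trans (c_to_all b Wb); rewrite R_sym; apply: c_to_all.
Qed.

(* If c \notin S, the deleted graph is still connected on V :\: S by the
   previous lemma unless every neighbour of z other than c lies in S. *)
Lemma del_edge_cut_nbhd c z (S : {set T}) : symmetric E -> irreflexive E ->
  c \in V -> {in V, forall a, a != c -> E c a} ->
  vertex_cut V (del_edge E c z) S -> ~~ vertex_cut V E S ->
  nbhd V E z \subset c |: S.
Proof.
move=> Esym Eirr Vc univ /andP[SV cutS].
rewrite /vertex_cut SV /= negb_or => /andP[conn W_neq1].
rewrite (negbTE W_neq1) orbF in cutS.
apply/subsetP=> h; rewrite !inE => /andP[Vh Ezh].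
have [//|hc /=] := eqVneq h c; apply: contraT => hS.
have [cS|cS] := boolP (c \in S).
  by rewrite del_edge_disconnected_off ?inE ?cS // (negbTE conn) in cutS.
have hz : h != z by apply: contraTneq Ezh => ->; rewrite Eirr.
have univW : {in V :\: S, forall a, a != c -> E c a}.
  by move=> a; rewrite inE => /andP[_]; apply: univ.
have := del_edge_universal_connected Esym _ univW _ hc hz Ezh.
by rewrite cutS; apply; rewrite inE ?cS ?hS.
Qed.

Lemma minimally_connected_nbhd_le_kappa c z : symmetric E -> irreflexive E ->
  c \in V -> {in V, forall a, a != c -> E c a} ->
  minimally_connected V E -> z \in V -> z != c -> #|nbhd V E z| <= kappa V E.
Proof.
move=> Esym Eirr Vc univ [conn mc] Vz zc.
have V_gt1 : 1 < #|V|.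
  have cz_sub : [set c; z] \subset V by rewrite subUset !sub1set Vc Vz.
  by apply: leq_trans (subset_leq_card cz_sub); rewrite cards2 eq_sym zc.
have kappa_pos := kappa_gt0 conn V_gt1.
have cz : c != z by rewrite eq_sym.
have del_kappa := mc c z Vc Vz cz (univ z Vz zc).
have [S cutS kappaS] : exists2 S, vertex_cut V (del_edge E c z) S
                               & kappa V (del_edge E c z) = #|S|.
  by apply: kappa_attained; rewrite del_kappa; have := kappa_le_card V E; lia.
have notcut : ~~ vertex_cut V E S.
  by apply/negP=> /kappa_le_cut; rewrite -kappaS del_kappa; lia.
have nbhd_sub := del_edge_cut_nbhd Esym Eirr Vc univ cutS notcut.
apply: leq_trans (subset_leq_card nbhd_sub) _; rewrite cardsU1 -kappaS del_kappa.
by apply: leq_trans (leq_add (leq_b1 _) (leqnn _)) _; lia.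
Qed.

Lemma star_minimally_connected c :
  (forall a b, a \in V -> b \in V -> E a b -> (a == c) || (b == c)) ->
  is_connected_graph V E -> minimally_connected V E.
Proof.
move=> star conn; split=> // a b Va Vb ab Eab.
have [z [Vz zc cz_ab]] : exists z, [/\ z \in V, z != c &
    ((a == c) && (b == z)) || ((a == z) && (b == c))].
  case/orP: (star a b Va Vb Eab) => /eqP ac; [exists b | exists a].
    by split; rewrite // -ac ?eqxx // eq_sym.
  by split; rewrite // -ac ?eqxx ?orbT.
have nbhd_z v : v \in V -> E z v -> v = c.
  by move=> Vv /(star z v Vz Vv); rewrite (negbTE zc) => /eqP.
have kappa1 : kappa V E = 1.
  apply/anti_leq/andP; split; last first.
    apply: kappa_gt0 conn _; have ab_sub : [set a; b] \subset V.
      by rewrite subUset !sub1set Va Vb.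
    by apply: leq_trans (subset_leq_card ab_sub); rewrite cards2 ab.
  have Ezz : ~~ E z z by apply/negP=> /(nbhd_z z Vz)/eqP; rewrite (negbTE zc).
  apply: leq_trans (kappa_le_nbhd Vz Ezz) _; rewrite -(cards1 c).
  by apply/subset_leq_card/subsetP=> v; rewrite !inE => /andP[Vv /(nbhd_z v Vv)->].
rewrite kappa1; apply/eqP; rewrite -leqn0 -(cards0 T).
apply/kappa_le_cut/(@isolated_vertex_cut _ _ _ _ z); rewrite ?sub0set ?setD0 //.
move=> v Vv; rewrite /del_edge /=; apply/negP=> /andP[/(nbhd_z v Vv) ->].
by case/orP: cz_ab => /andP[/eqP-> /eqP->]; rewrite !eqxx ?orbT.
Qed.

End DeletedEdge.

Lemma coprime_rel_sym (gT : finGroupType) : symmetric (@coprime_rel gT).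
Proof. by move=> a b; rewrite /coprime_rel /= eq_sym coprime_sym. Qed.

Lemma coprime_rel_irr (gT : finGroupType) : irreflexive (@coprime_rel gT).
Proof. by move=> a; rewrite /coprime_rel /= eqxx. Qed.

Lemma coprime_rel1g (gT : finGroupType) (a : gT) : a != 1%g -> coprime_rel 1%g a.
Proof. by move=> a1; rewrite /coprime_rel /= eq_sym a1 order1 coprime1n. Qed.

Lemma pelt_dvd_order (gT : finGroupType) (p : nat) (x : gT) :
  (p.-elt x)%g -> x != 1%g -> p %| #[x]%g.
Proof.
move=> px x1; have : pdiv #[x]%g \in \pi(#[x]%g) by rewrite pi_pdiv order_gt1.
by move/(pnatPpi px); rewrite inE => /eqP <-; apply: pdiv_dvd.
Qed.

Section CoprimeGraph.
Variables (gT : finGroupType) (G : {group gT}).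

Definition coprime_elts r := [set h in G | coprime r #[h]%g].

Lemma nbhd_coprime_rel g :
  g != 1%g -> nbhd G (@coprime_rel gT) g = coprime_elts #[g]%g.
Proof.
move=> g1; apply/setP=> h; rewrite !inE /coprime_rel /=.
have [<-|//] := eqVneq g h.
by rewrite /coprime gcdnn order_eq1 (negbTE g1) andbF.
Qed.

Lemma coprime_graph_connected : is_connected_graph G (@coprime_rel gT).
Proof.
have path1 a : a \in G -> connected_in (@coprime_rel gT) G 1%g a.
  move=> Ga; have [->|a1] := eqVneq a 1%g; first exact: connect0.
  by apply: connect1; rewrite /= group1 Ga coprime_rel1g.
apply/forallP=> a; apply/implyP=> Ga; apply/forallP=> b; apply/implyP=> Gb.
apply: connect_trans (path1 b Gb); rewrite /connected_in sym_connect_sym.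
  exact: path1.
by move=> u v /=; rewrite coprime_rel_sym andbCA.
Qed.

Lemma pgroup_coprime_rel_star (p : nat) : prime p -> (p.-group G)%g ->
  forall a b, a \in G -> b \in G -> coprime_rel a b -> (a == 1%g) || (b == 1%g).
Proof.
move=> p_pr pG a b Ga Gb /andP[_]; apply: contraTT; rewrite negb_or => /andP[a1 b1].
apply/negP=> /(coprime_dvdl (pelt_dvd_order (mem_p_elt pG Ga) a1)).
move/(coprime_dvdr (pelt_dvd_order (mem_p_elt pG Gb) b1)).
by rewrite prime_coprime ?dvdnn.
Qed.

Lemma minimally_connected_coprime_nbhd_le :
  minimally_connected G (@coprime_rel gT) ->
  forall z w, z \in G -> z != 1%g -> w \in G ->
  #|nbhd G (@coprime_rel gT) z| <= #|nbhd G (@coprime_rel gT) w|.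
Proof.
move=> mcG z w Gz z1 Gw.
have univ : {in G, forall a, a != 1%g -> coprime_rel 1%g a}.
  by move=> a _; apply: coprime_rel1g.
apply: leq_trans (kappa_le_nbhd Gw (negbT (coprime_rel_irr w))).
exact: minimally_connected_nbhd_le_kappa (@coprime_rel_sym gT) (@coprime_rel_irr gT)
  (group1 G) univ mcG Gz z1.
Qed.

End CoprimeGraph.

Section EqualDegrees.
Variables (gT : finGroupType) (G : {group gT}).
Hypothesis nbhd_min : forall z w, z \in G -> z != 1%g -> w \in G ->
  #|nbhd G (@coprime_rel gT) z| <= #|nbhd G (@coprime_rel gT) w|.

(* An element u of prime order r in <[g]> is adjacent to everything g is
   adjacent to, and also to the elements of prime order s in <[g]>. *)
Lemma prime_dvd_order_eq g r s : g \in G -> prime r -> prime s ->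
  r %| #[g]%g -> s %| #[g]%g -> r = s.
Proof.
move=> Gg r_pr s_pr rg sg; apply/eqP; apply: contraT => rs.
have [u gu ou] := Cauchy (G := <[g]>%G) r_pr rg.
have [v gv ov] := Cauchy (G := <[g]>%G) s_pr sg.
have gG : <[g]>%g \subset G by rewrite cycle_subG.
have [Gu Gv] := (subsetP gG u gu, subsetP gG v gv).
have u1 : u != 1%g by rewrite -order_gt1 ou prime_gt1.
have g1 : g != 1%g by rewrite -order_gt1 (leq_trans (prime_gt1 r_pr)) // dvdn_leq.
suff : #|nbhd G (@coprime_rel gT) g| < #|nbhd G (@coprime_rel gT) u|.
  by rewrite ltnNge (nbhd_min Gu u1 Gg).
apply: proper_card.
rewrite !nbhd_coprime_rel // ou; apply/properP; split.
  by apply/subsetP=> h; rewrite !inE => /andP[-> /(coprime_dvdl rg)].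
exists v; first by rewrite inE Gv ov prime_coprime // dvdn_prime2.
by rewrite inE ov coprime_sym prime_coprime // sg andbF.
Qed.

Lemma cent1_pelt x (p : nat) h : x \in G -> prime p -> #[x]%g = p ->
  h \in 'C_G[x]%g -> (p.-elt h)%g.
Proof.
move=> Gx p_pr ox /setIP[Gh /cent1P cxh].
apply/(pnatP _ (order_gt0 h)) => r r_pr rh; rewrite inE; apply/eqP.
have [ph|p'h] := boolP (p %| #[h]%g); first exact: prime_dvd_order_eq rh ph.
have oxh : #[x * h]%g = p * #[h]%g by rewrite orderM ?ox ?prime_coprime.
apply: (prime_dvd_order_eq (groupM Gx Gh) r_pr p_pr); rewrite oxh.
  exact: dvdn_mull.
exact: dvdn_mulr.
Qed.

Lemma card_coprime_elts_mod x (p : nat) r : x \in G -> (p.-elt x)%g ->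
  #|coprime_elts G r| = #|coprime_elts G r :&: 'C[x]%g| %[mod p].
Proof.
move=> Gx px; have xG : <[x]>%g \subset G by rewrite cycle_subG.
rewrite (pgroup_fix_mod (to := 'J%act) px) ?afixJ ?cent_cycle //.
apply/actsP=> a xa h; rewrite !inE orderJ groupJr //; exact: subsetP xG a xa.
Qed.

Lemma coprime_elts_cent1_prime x p : x \in G -> prime p -> #[x]%g = p ->
  coprime_elts G p :&: 'C[x]%g = [set 1%g].
Proof.
move=> Gx p_pr ox; apply/setP=> h.
rewrite in_setI [h \in coprime_elts _ _]inE in_set1.
apply/idP/eqP=> [/andP[/andP[Gh co] cxh] | ->]; last first.
  by rewrite group1 order1 coprimen1 group1.
have ph : (p.-elt h)%g by apply: cent1_pelt Gx p_pr ox _; rewrite inE Gh cxh.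
by apply/eqP; apply: contraTT co => h1; rewrite prime_coprime ?negbK ?pelt_dvd_order.
Qed.

Lemma coprime_elts_cent1_other x p q : x \in G -> prime p -> prime q -> p != q ->
  #[x]%g = p -> coprime_elts G q :&: 'C[x]%g = 'C_G[x]%g.
Proof.
move=> Gx p_pr q_pr pq ox; apply/setP=> h.
rewrite in_setI [h \in coprime_elts _ _]inE [h \in 'C_G[x]%g]in_setI.
case Gh: (h \in G); case cxh: (h \in 'C[x]%g); rewrite ?andbF //=.
have ph : (p.-elt h)%g by apply: cent1_pelt Gx p_pr ox _; rewrite inE Gh cxh.
rewrite andbT prime_coprime //; apply/negP=> qh.
move/(pnatP _ (order_gt0 h))/(_ q q_pr qh): ph.
by rewrite inE eq_sym (negbTE pq).
Qed.

Lemma prime_order_eq x y p q : x \in G -> y \in G -> prime p -> prime q ->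
  #[x]%g = p -> #[y]%g = q -> p = q.
Proof.
move=> Gx Gy p_pr q_pr ox oy; apply/eqP; apply: contraT => pq.
have px : (p.-elt x)%g by rewrite /p_elt ox pnat_id.
have [x1 y1] : x != 1%g /\ y != 1%g.
  by rewrite -!order_gt1 ox oy !prime_gt1.
have card_eq : #|coprime_elts G p| = #|coprime_elts G q|.
  rewrite -{1}ox -oy -!nbhd_coprime_rel //.
  by apply/anti_leq; rewrite !nbhd_min.
have p_dvd_cent : p %| #|'C_G[x]%g| by rewrite -ox cardSg ?subcent1_cycle_sub.
have := card_coprime_elts_mod p Gx px.
rewrite coprime_elts_cent1_prime // cards1 card_eq (card_coprime_elts_mod q Gx px).
rewrite (coprime_elts_cent1_other Gx p_pr q_pr pq ox) (eqP p_dvd_cent).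
by rewrite modn_small ?prime_gt1.
Qed.

End EqualDegrees.

Theorem mainTheorem13 (gT : finGroupType) (G : {group gT}) :
  minimally_connected G (@coprime_rel gT) <->
  exists p : nat, prime p /\ (p.-group G)%g.
Proof.
split=> [mcG|[p [p_pr pG]]]; last first.
  exact: star_minimally_connected (pgroup_coprime_rel_star p_pr pG)
                                  (coprime_graph_connected G).
have nbhd_min := minimally_connected_coprime_nbhd_le mcG.
have [G_le1|G_gt1] := leqP #|G| 1.
  by exists 2; rewrite (card_le1_trivg G_le1) pgroup1.
have p_pr := pdiv_prime G_gt1.
exists (pdiv #|G|); split=> //; apply/pgroupP=> q q_pr qG.
have [x Gx ox] := Cauchy p_pr (pdiv_dvd #|G|).
have [y Gy oy] := Cauchy q_pr qG.
by rewrite inE (prime_order_eq nbhd_min Gy Gx q_pr p_pr oy ox).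
Qed.
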